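(* Let $1\le d<N$ and $w\in I_{d,N}$. If $w$ has one of the forms (1) $w=(1,2,\dots,p,p+2,p+3,\dots,d,f)$ for some integers $0\le p<d-1$ and $d<f\le N$, or (2) $w=(1,2,\dots,d-1,f)$ for some integer $d<f\le N$, (equivalently, the reduced sequence $\overline w$ equals $(2,3,\dots,\overline d,\overline N)$ or $(\overline N)$), then the Schubert variety $X(w)$ contains a dense open orbit of the diagonal torus $T\subseteq GL_N$, so $X(w)$ is a toric variety for the torus $T/H$, where $H$ is the stabilizer in $T$ of a point of this orbit.
   Context: Work over $\mathbb{C}$. $G_{d,N}$ is the Grassmannian of $d$-planes in $\mathbb{C}^N$ with its Plücker embedding; $B\subset GL_N$ upper triangular, $T$ the diagonal matrices acting by left multiplication. $I_{d,N}$ is the set of sequences $(i_1<\dots<i_d)$ in $\{1,\dots,N\}$. For $w=(\ell_1,\dots,\ell_d)\in I_{d,N}$, $X(w)$ is the closure of $B\cdot[e_{\ell_1}\wedge\dots\wedge e_{\ell_d}]$ (a normal $T$-stable projective variety). Reduction of $w\ne(1,\dots,d)$: with $p\ge0$ maximal such that $\ell_i=i$ for $i\le p$, $\overline w=(\ell_{p+1}-p,\dots,\ell_d-p)$, $\overline d=d-p$, $\overline N=\ell_d-p$. In form (1) the sequence consists of $1,\dots,p$, then $p+2,\dots,d$, then $f$ (length $d$). *)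

From HB Require Import structures.
From mathcomp Require Import all_boot all_order all_algebra all_field.
Set Implicit Arguments. Unset Strict Implicit. Unset Printing Implicit Defensive.
Import GRing.Theory.
Local Open Scope ring_scope.

(* Index set of the Plücker basis: strictly increasing maps 'I_d -> 'I_N,
   i.e. sequences (i_1 < ... < i_d) of I_{d,N}, written 0-based. *)
Definition incrb (d N : nat) (f : {ffun 'I_d -> 'I_N}) : bool :=
  [forall i : 'I_d, forall j : 'I_d, (i < j)%N ==> (f i < f j)%N].

Definition Idx (d N : nat) := {f : {ffun 'I_d -> 'I_N} | incrb f}.

Definition subm (F : fieldType) (N d : nat) (g : 'M[F]_N) (s r : Idx d N)
  : 'M[F]_d := \matrix_(i < d, j < d) g (val s i) (val r j).

(* Action of g in GL_N on /\^d F^N in the Plücker basis e_{r_1}/\.../\e_{r_d}: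
   (g.x)_s = sum_r det(g_{s,r}) x_r. *)
Definition wedge_act (F : fieldType) (N d : nat) (g : 'M[F]_N)
  (x : Idx d N -> F) : Idx d N -> F :=
  fun s => \sum_(r : Idx d N) \det (subm g s r) * x r.

Definition ebasis (F : fieldType) (d N : nat) (w : Idx d N) : Idx d N -> F :=
  fun s => if s == w then 1 else 0.

(* A polynomial in variables indexed by the finite type K: a finite list of
   terms (coefficient, exponent vector). *)
Definition mpoly (F : fieldType) (K : finType) := seq (F * {ffun K -> nat}).

Definition meval (F : fieldType) (K : finType) (p : mpoly F K) (x : K -> F) : F :=
  \sum_(t <- p) t.1 * \prod_(k : K) x k ^+ t.2 k.

Definition homog (F : fieldType) (K : finType) (p : mpoly F K) : Prop :=
  exists e : nat, forall t, t \in p -> (\sum_(k : K) t.2 k)%N = e.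

(* Points of P(F^K) are represented by their (nonzero) cones: subsets of
   F^K \ {0} stable under nonzero scaling. *)
Definition nonzero (F : fieldType) (K : finType) (x : K -> F) : Prop :=
  exists k, x k != 0.

Definition pzero (F : fieldType) (K : finType) (P : mpoly F K -> Prop)
  (x : K -> F) : Prop :=
  nonzero x /\ forall p, P p -> meval p x = 0.

Definition pclosure (F : fieldType) (K : finType) (S : (K -> F) -> Prop)
  (x : K -> F) : Prop :=
  nonzero x /\
  forall p : mpoly F K, homog p -> (forall y, S y -> meval p y = 0) -> meval p x = 0.

Definition open_in (F : fieldType) (K : finType) (X U : (K -> F) -> Prop) : Prop :=
  exists P : mpoly F K -> Prop, (forall p, P p -> homog p) /\
    forall y, U y <-> (X y /\ ~ pzero P y).

Definition dense_in (F : fieldType) (K : finType) (X U : (K -> F) -> Prop) : Prop :=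
  forall y, X y -> pclosure U y.

Definition upper_tri (F : fieldType) (N : nat) (g : 'M[F]_N) : Prop :=
  forall i j : 'I_N, (j < i)%N -> g i j = 0.

(* Cone over the orbit B.[e_w] in P(/\^d F^N). *)
Definition Borbit (F : fieldType) (d N : nat) (w : Idx d N) (y : Idx d N -> F) : Prop :=
  exists (g : 'M[F]_N) (c : F), [/\ upper_tri g, g \in unitmx, c != 0 &
    forall s, y s = c * wedge_act g (ebasis F w) s].

Definition Schubert (F : fieldType) (d N : nat) (w : Idx d N) :=
  pclosure (Borbit (F := F) w).

Definition Torbit (F : fieldType) (d N : nat) (x : Idx d N -> F) (y : Idx d N -> F) : Prop :=
  exists (t : 'I_N -> F) (c : F), [/\ forall i, t i != 0, c != 0 &
    forall s, y s = c * wedge_act (diag_mx (\row_i t i)) x s].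

From HB Require Import structures.
From mathcomp Require Import all_boot all_order all_algebra all_field.
From mathcomp Require Import perm zify ring.
Set Implicit Arguments. Unset Strict Implicit. Unset Printing Implicit Defensive.
Import GRing.Theory.
Local Open Scope ring_scope.

(* Write d = n + 1 and, 0-based, w = (0, ..., n) with p removed and f - 1
   appended.  The indices s <= w are (0, ..., n) itself and the sequences
   obtained from it by removing some a in [p, n] and appending some j in
   (n, f); all other Plücker coordinates vanish on X(w).  Expanding along the
   last row shows that on the B-orbit the coordinates x_{a,j} form a rank-one
   matrix, so on X(w) they satisfy x_{a,j} x_{a',j'} = x_{a,j'} x_{a',j}.
   Hence any two points of X(w) at which all coordinates s <= w are nonzero
   differ by a torus element, i.e. this open subset is a single T-orbit.  It
   meets the B-orbit, which is parametrised polynomially by an irreducible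
   affine space, so it is dense in X(w). *)

Section PolynomialFunctions.
Variables (F : fieldType) (V : Type).
Hypothesis F_nonroot : forall P : {poly F}, P != 0 -> exists x, ~~ root P x.

Inductive polyfun : ((V -> F) -> F) -> Prop :=
| polyfunC c : polyfun (fun _ => c)
| polyfunX v : polyfun (fun z => z v)
| polyfunD f g : polyfun f -> polyfun g -> polyfun (fun z => f z + g z)
| polyfunM f g : polyfun f -> polyfun g -> polyfun (fun z => f z * g z)
| polyfun_ext f g : f =1 g -> polyfun f -> polyfun g.

Lemma polyfun_line f : polyfun f -> forall z1 z2 : V -> F, exists P : {poly F},
  forall l, f (fun v => z1 v + l * (z2 v - z1 v)) = P.[l].
Proof.
elim=> {f} [c | v | f g _ IHf _ IHg | f g _ IHf _ IHg | f g fg _ IH] z1 z2.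
- by exists c%:P => l; rewrite hornerC.
- by exists ((z1 v)%:P + 'X * (z2 v - z1 v)%:P) => l; rewrite !hornerE.
- have [P HP] := IHf z1 z2; have [Q HQ] := IHg z1 z2.
  by exists (P + Q) => l; rewrite hornerD HP HQ.
- have [P HP] := IHf z1 z2; have [Q HQ] := IHg z1 z2.
  by exists (P * Q) => l; rewrite hornerM HP HQ.
- by have [P HP] := IH z1 z2; exists P => l; rewrite -HP fg.
Qed.

Lemma polyfun_congr f : polyfun f -> forall z z' : V -> F, z =1 z' -> f z = f z'.
Proof.
elim=> {f} [c | v | f g _ IHf _ IHg | f g _ IHf _ IHg | f g fg _ IH] z z' zz' //=.
- by rewrite (IHf z z') // (IHg z z').
- by rewrite (IHf z z') // (IHg z z').
- by rewrite -!fg; apply: IH.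
Qed.

(* Restricting to the line through two points where f and g do not vanish
   reduces the claim to the fact that {poly F} is a domain. *)
Lemma polyfun_mul_neq0 f g : polyfun f -> polyfun g ->
  (exists z, f z != 0) -> (exists z, g z != 0) -> exists z, f z * g z != 0.
Proof.
move=> pf pg [z1 fz1] [z2 gz2].
have [P HP] := polyfun_line pf z1 z2; have [Q HQ] := polyfun_line pg z1 z2.
have P_neq0 : P != 0.
  apply: contraNneq fz1 => P0.
  rewrite (polyfun_congr pf (z' := fun v => z1 v + 0 * (z2 v - z1 v))).
    by rewrite HP P0 horner0.
  by move=> v; rewrite mul0r addr0.
have Q_neq0 : Q != 0.
  apply: contraNneq gz2 => Q0.
  rewrite (polyfun_congr pg (z' := fun v => z1 v + 1 * (z2 v - z1 v))).
    by rewrite HQ Q0 horner0.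
  by move=> v; rewrite mul1r addrC subrK.
have [l Hl] := F_nonroot (mulf_neq0 P_neq0 Q_neq0).
by exists (fun v => z1 v + l * (z2 v - z1 v)); rewrite HP HQ -hornerM.
Qed.

Lemma polyfun_sum (I : Type) (r : seq I) (f : I -> (V -> F) -> F) :
  (forall i, polyfun (f i)) -> polyfun (fun z => \sum_(i <- r) f i z).
Proof.
move=> pf; elim: r => [|i r IH].
  by apply: (polyfun_ext _ (polyfunC 0)) => z; rewrite big_nil.
by apply: (polyfun_ext _ (polyfunD (pf i) IH)) => z; rewrite big_cons.
Qed.

Lemma polyfun_prod (I : Type) (r : seq I) (f : I -> (V -> F) -> F) :
  (forall i, polyfun (f i)) -> polyfun (fun z => \prod_(i <- r) f i z).
Proof.
move=> pf; elim: r => [|i r IH].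
  by apply: (polyfun_ext _ (polyfunC 1)) => z; rewrite big_nil.
by apply: (polyfun_ext _ (polyfunM (pf i) IH)) => z; rewrite big_cons.
Qed.

Lemma polyfun_exp f k : polyfun f -> polyfun (fun z => f z ^+ k).
Proof.
move=> pf; apply: (polyfun_ext _ (polyfun_prod (index_iota 0 k) (fun=> pf))).
by move=> z; rewrite prodr_const_nat subn0.
Qed.

Lemma polyfun_prod_neq0 (I : eqType) (r : seq I) (f : I -> (V -> F) -> F) :
  (forall i, polyfun (f i)) -> (forall i, i \in r -> exists z, f i z != 0) ->
  exists z, \prod_(i <- r) f i z != 0.
Proof.
move=> pf; elim: r => [|i r IH] nz.
  by exists (fun _ => 0); rewrite big_nil oner_neq0.
have [|z fz] := polyfun_mul_neq0 (pf i) (polyfun_prod r pf) (nz i (mem_head i r)).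
  by apply: IH => j jr; apply: nz; rewrite inE jr orbT.
by exists z; rewrite big_cons.
Qed.

Lemma polyfun_det n (A : (V -> F) -> 'M[F]_n) :
  (forall i j, polyfun (fun z => A z i j)) -> polyfun (fun z => \det (A z)).
Proof.
move=> pA; apply: polyfun_sum => s; apply: polyfunM; first exact: polyfunC.
by apply: polyfun_prod => i; apply: pA.
Qed.

Lemma polyfun_meval (K : finType) (p : mpoly F K) (y : (V -> F) -> K -> F) :
  (forall k, polyfun (fun z => y z k)) -> polyfun (fun z => meval p (y z)).
Proof.
move=> py; apply: polyfun_sum => t; apply: polyfunM; first exact: polyfunC.
by apply: polyfun_prod => k; apply: polyfun_exp.
Qed.

End PolynomialFunctions.

Arguments polyfunC {F V} c.
Arguments polyfunX {F V} v.

Section Monomials.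
Variables (F : fieldType) (K : finType).

Definition varX (s : K) : mpoly F K := [:: (1, [ffun k => nat_of_bool (k == s)])].

Definition prodX (A : pred K) : mpoly F K := [:: (1, [ffun k => nat_of_bool (A k)])].

Definition binomialX (s1 s2 s3 s4 : K) : mpoly F K :=
  [:: (1, [ffun k => nat_of_bool (k == s1) + nat_of_bool (k == s2)]%N);
      (-1, [ffun k => nat_of_bool (k == s3) + nat_of_bool (k == s4)]%N)].

Lemma eq_meval (p : mpoly F K) (y y' : K -> F) : y =1 y' -> meval p y = meval p y'.
Proof.
by move=> yy'; rewrite /meval; apply: eq_bigr => t _; under eq_bigr do rewrite yy'.
Qed.

Lemma prod_exp_eqb (y : K -> F) s : \prod_k y k ^+ (k == s) = y s.
Proof. by rewrite (bigD1 s) //= eqxx big1 ?mulr1 // => k /negbTE ->. Qed.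

Lemma meval_varX s y : meval (varX s) y = y s.
Proof.
rewrite /meval big_seq1 mul1r -(prod_exp_eqb y s).
by apply: eq_bigr => k _; rewrite ffunE.
Qed.

Lemma meval_prodX A y : meval (prodX A) y = \prod_(k | A k) y k.
Proof.
rewrite /meval big_seq1 mul1r [RHS]big_mkcond.
by apply: eq_bigr => k _; rewrite ffunE; case: (A k).
Qed.

Lemma meval_binomialX s1 s2 s3 s4 y :
  meval (binomialX s1 s2 s3 s4) y = y s1 * y s2 - y s3 * y s4.
Proof.
rewrite /meval big_cons big_seq1 /= mul1r mulN1r.
rewrite -(prod_exp_eqb y s1) -(prod_exp_eqb y s2) -(prod_exp_eqb y s3).
rewrite -(prod_exp_eqb y s4) -!big_split /=.
by congr (_ - _); apply: eq_bigr => k _; rewrite ffunE exprD.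
Qed.

Lemma sum_nat_eqb (s : K) : (\sum_k nat_of_bool (k == s) = 1)%N.
Proof. by rewrite (bigD1 s) //= eqxx big1 // => k /negbTE ->. Qed.

Lemma homog_varX s : homog (varX s).
Proof.
by exists 1%N => t /[!inE] /eqP -> /=; under eq_bigr do rewrite ffunE; apply: sum_nat_eqb.
Qed.

Lemma homog_prodX A : homog (prodX A).
Proof.
exists (\sum_k nat_of_bool (A k))%N => t /[!inE] /eqP -> /=.
by under eq_bigr do rewrite ffunE.
Qed.

Lemma homog_binomialX s1 s2 s3 s4 : homog (binomialX s1 s2 s3 s4).
Proof.
exists 2%N => t /[!inE] /orP[] /eqP -> /=;
  by under eq_bigr do rewrite ffunE; rewrite big_split /= !sum_nat_eqb.
Qed.

End Monomials.

Arguments varX {F K} s.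
Arguments prodX {F K} A.
Arguments binomialX {F K} s1 s2 s3 s4.

Section IncreasingOrdinalMaps.
Variable d : nat.
Variable g : 'I_d -> nat.
Hypothesis g_incr : forall i j : 'I_d, (i < j)%N -> (g i < g j)%N.

Lemma incr_ord_gap (i k : 'I_d) : (i <= k)%N -> (g i + (k - i) <= g k)%N.
Proof.
case: k => k kd /=; elim: k kd => [|k IH] kd ik.
  have -> : i = Ordinal kd by apply: ord_inj => /=; lia.
  by rewrite subnn addn0.
case: (eqVneq (i : nat) k.+1) => [ik1|ik1].
  have -> : i = Ordinal kd by apply: ord_inj.
  by rewrite subnn addn0.
have kd' : (k < d)%N by lia.
have := IH kd' ltac:(lia); have := g_incr (i := Ordinal kd') (j := Ordinal kd) (ltnSn k).
rewrite /=; lia.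
Qed.

Lemma incr_ord_geq (i : 'I_d) : (i <= g i)%N.
Proof.
have := incr_ord_gap (i := Ordinal (leq_ltn_trans (leq0n i) (ltn_ord i))) (leq0n i).
rewrite /=; lia.
Qed.

End IncreasingOrdinalMaps.

Lemma incr_ord_id d (phi : 'I_d -> 'I_d) :
  (forall i j : 'I_d, (i < j)%N -> (phi i < phi j)%N) -> phi =1 id.
Proof.
move=> phi_incr i; apply: ord_inj; apply/eqP.
rewrite eqn_leq (incr_ord_geq (g := fun i => nat_of_ord (phi i))) // andbT.
have d_top : (d.-1 < d)%N by have := ltn_ord i; lia.
have i_top : (i <= Ordinal d_top)%N by rewrite /=; have := ltn_ord i; lia.
have := incr_ord_gap (g := fun i => nat_of_ord (phi i)) phi_incr i_top.
by have := ltn_ord (phi (Ordinal d_top)); rewrite /=; lia.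
Qed.

Section PluckerIndices.
Variables d N : nat.

Definition entry (s : Idx d N) (i : 'I_d) : nat := val (val s i).

Definition idx_le (s t : Idx d N) : bool := [forall i, entry s i <= entry t i]%N.

Lemma entry_lt (s : Idx d N) (i j : 'I_d) : (i < j)%N -> (entry s i < entry s j)%N.
Proof.
case: s => f incr_f; rewrite /entry /=.
by move: incr_f => /forallP/(_ i)/forallP/(_ j)/implyP.
Qed.

Lemma entry_le (s : Idx d N) (i j : 'I_d) : (i <= j)%N -> (entry s i <= entry s j)%N.
Proof.
by rewrite leq_eqVlt => /orP[/eqP/ord_inj -> // | /(entry_lt s)/ltnW].
Qed.

Lemma entry_inj (s : Idx d N) : injective (entry s).
Proof.
by move=> i j; case: (ltngtP i j) => [/(entry_lt s)|/(entry_lt s)|/ord_inj //]; lia.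
Qed.

Lemma entry_gap (s : Idx d N) (i k : 'I_d) :
  (i <= k)%N -> (entry s i + (k - i) <= entry s k)%N.
Proof. by move=> ik; apply: (incr_ord_gap (g := entry s) _ ik) => a b; apply: entry_lt. Qed.

Lemma leq_entry (s : Idx d N) (i : 'I_d) : (i <= entry s i)%N.
Proof. by apply: (incr_ord_geq (g := entry s)) => a b; apply: entry_lt. Qed.

Lemma idx_inj (s r : Idx d N) : entry s =1 entry r -> s = r.
Proof. by move=> sr; apply/val_inj/ffunP => i; apply/val_inj/sr. Qed.

Lemma idx_eq_of_sub (s r : Idx d N) :
  (forall i, exists k, entry s i = entry r k) -> s = r.
Proof.
move=> /fin_all_exists [phi sr]; apply: idx_inj => i; rewrite sr.
suff -> : phi i = i by [].
apply: incr_ord_id => {}i j ij; have := entry_lt s ij; rewrite !sr.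
by rewrite ltnNge; apply: contraNltn => /(entry_le r).
Qed.

End PluckerIndices.

Lemma det_zero_block (F : fieldType) n (A : 'M[F]_n) (k : 'I_n) :
  (forall i l : 'I_n, (k <= i)%N -> (l <= k)%N -> A i l = 0) -> \det A = 0.
Proof.
move=> A0; rewrite /determinant; apply: big1 => s _.
apply/eqP; rewrite mulf_eq0; apply/orP; right.
case: (boolP [exists i : 'I_n, (k <= i)%N && (s i <= k)%N]).
  by case/existsP => i /andP[ki sik]; apply/prodf_eq0; exists i => //; rewrite A0.
move/existsPn => s_up; exfalso.
set A1 := [set i : 'I_n | (k <= i)%N]; set B1 := [set i : 'I_n | (k < i)%N].
have sA1 : [set s x | x in A1] \subset B1.
  apply/subsetP => y /imsetP[x]; rewrite !inE => kx ->.
  by rewrite ltnNge; have := s_up x; rewrite kx.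
have B1A1 : B1 \proper A1.
  apply/properP; split; first by apply/subsetP => y; rewrite !inE => /ltnW.
  by exists k; rewrite !inE ?leqnn ?ltnn.
have := subset_leq_card sA1; rewrite card_imset; last exact: perm_inj.
by rewrite leqNgt proper_card.
Qed.

Lemma det_upper (F : fieldType) n (g : 'M[F]_n) : upper_tri g -> \det g = \prod_i g i i.
Proof.
move=> ug; rewrite -det_tr det_trig; first by apply: eq_bigr => i _; rewrite mxE.
by apply/is_trig_mxP => i j ij; rewrite mxE ug.
Qed.

Section Minors.
Variables (F : fieldType) (d N : nat).
Implicit Types (s r w : Idx d N) (b : 'M[F]_N) (t : 'I_N -> F).

Lemma det_subm_diag t s r :
  \det (subm (diag_mx (\row_i t i)) s r) = if s == r then \prod_i t (val s i) else 0.
Proof.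
case: eqP => [<-|/eqP sr].
  rewrite (_ : subm _ s s = diag_mx (\row_i t (val s i))) ?det_diag.
    by apply: eq_bigr => i _; rewrite mxE.
  apply/matrixP => i j; rewrite !mxE; case: (eqVneq i j) => [->|ij]; first by rewrite !eqxx.
  suff /negbTE -> : val s i != val s j by [].
  by apply: contra ij => /eqP sij; apply/eqP/(@entry_inj d N s); rewrite /entry sij.
have [i si] : exists i, forall l, entry s i != entry r l.
  case: (boolP [exists i, [forall l, entry s i != entry r l]]).
    by case/existsP => i /forallP si; exists i.
  move/existsPn => s_r; case/eqP: sr; apply: idx_eq_of_sub => i.
  by have /forallPn[l /negPn/eqP] := s_r i; exists l.
rewrite /determinant; apply: big1 => sg _.
apply/eqP; rewrite mulf_eq0; apply/orP; right; apply/prodf_eq0; exists i => //.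
rewrite !mxE; suff /negbTE -> : val s i != val r (sg i) by [].
by apply: contra (si (sg i)) => /eqP sri; rewrite /entry sri.
Qed.

Lemma wedge_ebasis b w s : wedge_act b (ebasis F w) s = \det (subm b s w).
Proof.
rewrite /wedge_act (bigD1 w) //= /ebasis eqxx mulr1 big1 ?addr0 //.
by move=> r /negbTE ->; rewrite mulr0.
Qed.

Lemma wedge_diag t (x : Idx d N -> F) s :
  wedge_act (diag_mx (\row_i t i)) x s = (\prod_i t (val s i)) * x s.
Proof.
rewrite /wedge_act (bigD1 s) //= big1 ?addr0; first by rewrite det_subm_diag eqxx.
by move=> r /negbTE sr; rewrite det_subm_diag eq_sym sr mul0r.
Qed.

Lemma det_subm_diag_mul t b s r :
  \det (subm (diag_mx (\row_i t i) *m b) s r) = (\prod_i t (val s i)) * \det (subm b s r).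
Proof.
rewrite (_ : subm _ s r = diag_mx (\row_i t (val s i)) *m subm b s r).
  by rewrite det_mulmx det_diag; congr (_ * _); apply: eq_bigr => i _; rewrite mxE.
by rewrite !mul_diag_mx; apply/matrixP => i j; rewrite !mxE.
Qed.

Lemma det_subm_upper_eq0 b s w : upper_tri b -> ~~ idx_le s w -> \det (subm b s w) = 0.
Proof.
move=> ub /forallPn[k]; rewrite -ltnNge => wk_sk.
apply: (det_zero_block (k := k)) => i l ki lk; rewrite mxE; apply: ub.
change (entry w l < entry s i)%N.
by have := entry_le w lk; have := entry_le s ki; lia.
Qed.

Lemma det_subm_upper_diag b w :
  upper_tri b -> \det (subm b w w) = \prod_i b (val w i) (val w i).
Proof.
move=> ub; rewrite det_upper => [|i l li]; first by apply: eq_bigr => i _; rewrite mxE.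
by rewrite mxE ub //; apply: (entry_lt w li).
Qed.

(* The 0/1 matrix with b (s_i, w_i) = 1 has identity minor at (s, w). *)
Lemma upper_minor1 s w : idx_le s w -> exists b, upper_tri b /\ \det (subm b s w) = 1.
Proof.
move=> /forallP sw.
exists (\matrix_(r, c) [exists i, (r == val s i) && (c == val w i)]%:R); split.
  move=> r c cr; rewrite mxE; case: existsP => // -[i /andP[/eqP rs /eqP cw]].
  by have := sw i; rewrite /entry -rs -cw leqNgt cr.
rewrite (_ : subm _ s w = 1%:M) ?det1 //; apply/matrixP => i l; rewrite !mxE.
congr (_ *+ nat_of_bool _); apply/existsP/eqP => [[k /andP[/eqP sik /eqP wlk]]|->].
  have -> : i = k by apply: (@entry_inj _ _ s); rewrite /entry sik.
  by apply: (@entry_inj _ _ w); rewrite /entry wlk.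
by exists l; rewrite !eqxx.
Qed.

End Minors.

Section BorelOrbit.
Variables (F : fieldType) (d N : nat) (w : Idx d N).
Implicit Types (x y : Idx d N -> F) (s : Idx d N).

(* Coordinates of the pairs (c, g) with g upper triangular: [None] is the
   scalar c and [Some (i, j)] the entry g_ij, i <= j. *)
Definition bparam := option ('I_N * 'I_N).

Definition upper_of (z : bparam -> F) : 'M[F]_N :=
  \matrix_(i, j) if (i <= j)%N then z (Some (i, j)) else 0.

Definition bpoint (z : bparam -> F) s : F := z None * \det (subm (upper_of z) s w).

Definition full y : bool := \prod_(s | idx_le s w) y s != 0.

Lemma fullP y : reflect (forall s, idx_le s w -> y s != 0) (full y).
Proof. exact: prodf_neq0. Qed.

Lemma upper_of_upper z : upper_tri (upper_of z).
Proof. by move=> i j ji; rewrite mxE leqNgt ji. Qed.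

Lemma bpoint_borbit z : z None != 0 -> \det (upper_of z) != 0 -> Borbit w (bpoint z).
Proof.
move=> c0 g0; exists (upper_of z), (z None); split => //.
- exact: upper_of_upper.
- by rewrite unitmxE unitfE.
- by move=> s; rewrite wedge_ebasis.
Qed.

Lemma borbit_bpoint y : Borbit w y -> exists z, y =1 bpoint z.
Proof.
case=> g [c [ug _ _ yg]]; pose z (v : bparam) := if v is Some ij then g ij.1 ij.2 else c.
have gz : g = upper_of z by apply/matrixP => i j; rewrite mxE /=; case: leqP => // /ug.
by exists z => s; rewrite yg wedge_ebasis gz.
Qed.

Lemma borbit_nonzero y : Borbit w y -> nonzero y.
Proof.
case=> g [c [ug g_unit c0 yg]]; exists w; rewrite yg wedge_ebasis det_subm_upper_diag //.
rewrite mulf_neq0 //; apply/prodf_neq0 => i _.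
by move: g_unit; rewrite unitmxE unitfE det_upper // => /prodf_neq0; apply.
Qed.

Lemma borbit_schubert y : Borbit w y -> Schubert w y.
Proof. by move=> By; split; [exact: borbit_nonzero | move=> q _; apply]. Qed.

Lemma schubert_eq0 y s : Schubert w y -> ~~ idx_le s w -> y s = 0.
Proof.
move=> [_ Xy] sw; rewrite -(meval_varX s y); apply: Xy; first exact: homog_varX.
move=> z [g [c [ug _ _ zg]]].
by rewrite meval_varX zg wedge_ebasis det_subm_upper_eq0 ?mulr0.
Qed.

Lemma borbit_torbit x y : Borbit w x -> Torbit x y -> Borbit w y.
Proof.
move=> [g [c [ug g_unit c0 xg]]] [t [c' [t0 c'0 yt]]].
exists (diag_mx (\row_i t i) *m g), (c' * c); split.
- by move=> i j ji; rewrite mul_diag_mx mxE ug // mulr0.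
- rewrite unitmx_mul g_unit andbT unitmxE unitfE det_diag.
  by apply/prodf_neq0 => i _; rewrite mxE.
- exact: mulf_neq0.
- by move=> s; rewrite yt wedge_diag xg !wedge_ebasis det_subm_diag_mul; ring.
Qed.

Lemma full_torbit x y : full x -> Torbit x y -> full y.
Proof.
move=> /fullP x0 [t [c [t0 c0 yt]]]; apply/fullP => s sw.
by rewrite yt wedge_diag !mulf_neq0 ?x0 //; apply/prodf_neq0.
Qed.

Section Density.
Hypothesis F_nonroot : forall P : {poly F}, P != 0 -> exists a, ~~ root P a.

Definition bgeneric (z : bparam -> F) : F :=
  \det (upper_of z) * \prod_(s | idx_le s w) bpoint z s.

Lemma polyfun_upper_of i j : polyfun (fun z => upper_of z i j).
Proof.
case: (leqP i j) => ij.
  by apply: (polyfun_ext _ (polyfunX (Some (i, j)))) => z; rewrite mxE ij.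
by apply: (polyfun_ext _ (polyfunC 0)) => z; rewrite mxE leqNgt ij.
Qed.

Lemma polyfun_bpoint s : polyfun (fun z => bpoint z s).
Proof.
apply: polyfunM; first exact: polyfunX.
apply: polyfun_det => i j.
by apply: (polyfun_ext _ (polyfun_upper_of (val s i) (val w j))) => z; rewrite [RHS]mxE.
Qed.

Lemma polyfun_prod_bpoint : polyfun (fun z => \prod_(s | idx_le s w) bpoint z s).
Proof.
apply: (polyfun_ext _ (polyfun_prod [seq s <- index_enum _ | idx_le s w] polyfun_bpoint)).
by move=> z; rewrite big_filter.
Qed.

Lemma polyfun_bgeneric : polyfun bgeneric.
Proof.
apply: polyfunM polyfun_prod_bpoint.
by apply: polyfun_det => i j; apply: polyfun_upper_of.
Qed.

Lemma bgeneric_neq0 : exists z, bgeneric z != 0.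
Proof.
apply: (polyfun_mul_neq0 F_nonroot).
- by apply: polyfun_det => i j; apply: polyfun_upper_of.
- exact: polyfun_prod_bpoint.
- exists (fun _ => 1); rewrite det_upper; last exact: upper_of_upper.
  by apply/prodf_neq0 => i _; rewrite mxE leqnn oner_neq0.
have nz s : s \in [seq s <- index_enum _ | idx_le s w] -> exists z, bpoint z s != 0.
  rewrite mem_filter => /andP[/(upper_minor1 F) [g [ug g1]] _].
  pose z (v : bparam) := if v is Some ij then g ij.1 ij.2 else 1.
  have gz : g = upper_of z by apply/matrixP => i j; rewrite mxE /=; case: leqP => // /ug.
  by exists z; rewrite /bpoint -gz g1 mulr1 oner_neq0.
have [z bz] := polyfun_prod_neq0 F_nonroot polyfun_bpoint nz.
by exists z; rewrite big_filter in bz.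
Qed.

Lemma bgeneric_full z : bgeneric z != 0 -> Borbit w (bpoint z) /\ full (bpoint z).
Proof.
rewrite mulf_eq0 negb_or => /andP[g0 fz]; split => //.
have ww : idx_le w w by apply/forallP => i.
move/fullP: fz => /(_ w ww); rewrite /bpoint mulf_eq0 negb_or => /andP[c0 _].
exact: bpoint_borbit.
Qed.

Lemma exists_borbit_full : exists x, Borbit w x /\ full x.
Proof. by have [z /bgeneric_full] := bgeneric_neq0; exists (bpoint z). Qed.

(* The B-orbit is the image of a polynomial map from an irreducible affine
   space, in which the full points form a nonempty open subset. *)
Lemma meval_borbit_eq0 (q : mpoly F (Idx d N)) :
  (forall y, Borbit w y -> full y -> meval q y = 0) ->
  forall y, Borbit w y -> meval q y = 0.
Proof.
move=> q0 y /borbit_bpoint[z0 yz0]; rewrite (eq_meval _ yz0).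
apply/eqP; apply: contraT => qz0.
have [z] := polyfun_mul_neq0 F_nonroot (polyfun_meval q (y := bpoint) polyfun_bpoint)
  polyfun_bgeneric (ex_intro _ z0 qz0) bgeneric_neq0.
rewrite mulf_eq0 negb_or => /andP[qz /bgeneric_full[Bz fz]].
by rewrite q0 ?eqxx in qz.
Qed.

End Density.
End BorelOrbit.

Lemma unit_steps_bump (g : nat -> nat) m :
  (forall i, (i < m)%N -> (i <= g i <= i.+1)%N) ->
  (forall i, (i.+1 < m)%N -> (g i < g i.+1)%N) ->
  exists2 a, (a <= m)%N & forall i, (i < m)%N -> g i = bump a i.
Proof.
elim: m => [|m IH] g_step g_incr; first by exists 0%N.
have [||a am ga] := IH.
- by move=> i im; apply: g_step; lia.
- by move=> i im; apply: g_incr; lia.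
have gm := g_step m (ltnSn m).
have [am'|ma] := ltnP a m.
  exists a; first lia.
  have ga' := ga m.-1 ltac:(lia); have gi := g_incr m.-1 ltac:(lia).
  rewrite (ltn_predK am') in gi.
  by move=> i; rewrite ltnS leq_eqVlt => /orP[/eqP ->|/ga //]; rewrite /bump in ga' *; lia.
have a_m : a = m by lia.
exists (m + (g m == m))%N => [|i]; first by case: eqP => _; lia.
rewrite ltnS leq_eqVlt => /orP[/eqP ->|im]; rewrite /bump.
  by case: eqP; lia.
by rewrite ga // /bump a_m; case: eqP; lia.
Qed.

Section ToricSchubert.
Variables (n N p f : nat).
Hypotheses (le_pn : (p <= n)%N) (lt_nf : (n.+1 < f)%N) (le_fN : (f <= N)%N).

(* (0, ..., n) with the entry a removed and j appended. *)
Definition skip_seq (a j i : nat) : nat := if (i < n)%N then bump a i else j.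

Definition skip_ok (a j : nat) : bool :=
  [&& a <= n, j < N, n <= j & (a == n) || (n < j)]%N.

Variable w : Idx n.+1 N.
Hypothesis w_skip : forall i, entry w i = skip_seq p f.-1 i.

(* Junk value [w] unless [skip_ok a j]. *)
Definition skip (a j : nat) : Idx n.+1 N :=
  odflt w [pick s : Idx n.+1 N | [forall i, entry s i == skip_seq a j i]].

Definition supp_pair (a j : nat) : bool :=
  [|| (p <= a <= n) && (n < j < f) | (a == n) && (j == n)]%N.

Lemma entry_skip a j : skip_ok a j -> forall i, entry (skip a j) i = skip_seq a j i.
Proof.
case/and4P => an jN nj anj; rewrite /skip; case: pickP => [s /forallP s_aj i|no_s].
  exact/eqP/s_aj.
have lt_N (i : 'I_n.+1) : (skip_seq a j i < N)%N.
  by rewrite /skip_seq /bump; have := ltn_ord i; case: ifP; lia.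
have incr : incrb [ffun i : 'I_n.+1 => Ordinal (lt_N i)].
  apply/forallP => i; apply/forallP => k; apply/implyP => ik.
  rewrite !ffunE /= /skip_seq /bump.
  by have := ltn_ord k; move: anj; case: ifP; case: ifP; lia.
have /negbT/negP[] := no_s (exist (@incrb n.+1 N) _ incr).
by apply/forallP => i; rewrite /entry /= ffunE.
Qed.

Lemma skip_eq a j s : skip_ok a j -> (forall i, entry s i = skip_seq a j i) -> s = skip a j.
Proof. by move=> aj s_aj; apply: idx_inj => i; rewrite s_aj entry_skip. Qed.

Lemma skip_ok_supp a j : supp_pair a j -> skip_ok a j.
Proof. by rewrite /supp_pair /skip_ok; lia. Qed.

Lemma idx_le_skip a j : supp_pair a j -> idx_le (skip a j) w.
Proof.
move=> aj; apply/forallP => i; rewrite entry_skip ?skip_ok_supp // w_skip /skip_seq /bump.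
by move: aj; rewrite /supp_pair; case: ifP; lia.
Qed.

Lemma idx_le_w_skip s : idx_le s w -> exists a j, supp_pair a j /\ s = skip a j.
Proof.
move=> /forallP s_w; set j := entry s ord_max.
have j_f : (j < f)%N by have := s_w ord_max; rewrite w_skip /skip_seq ltnn; lia.
have n_j : (n <= j)%N by apply: (leq_entry s ord_max).
have [j_n|j_n] := eqVneq j n.
  exists n, n; split; first by rewrite /supp_pair !eqxx orbT.
  apply: skip_eq => [|i]; first by rewrite /skip_ok eqxx; lia.
  have := entry_gap s (k := ord_max) (leq_ord i); have := leq_entry s i; have := ltn_ord i.
  by rewrite /= -/j /skip_seq /bump; case: ifP; lia.
pose g m := entry s (inord m).
have gE (i : 'I_n.+1) : g i = entry s i by rewrite /g inord_val.
have g_w m : (m < n)%N -> (m <= g m <= bump p m)%N.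
  move=> mn; have mn1 : (m < n.+1)%N by apply: ltnW.
  have := s_w (inord m); rewrite w_skip /skip_seq inordK // mn => ->.
  by rewrite andbT /g -{1}(inordK mn1) leq_entry.
(* Below the last entry, i <= s_i <= w_i <= i + 1: s moves up by one exactly once. *)
have [a an ga] : exists2 a, (a <= n)%N & forall i, (i < n)%N -> g i = bump a i.
  apply: unit_steps_bump => [i /g_w|i i_n]; first by rewrite /bump; lia.
  by rewrite /g; apply: entry_lt; rewrite !inordK; lia.
have pa : (p <= a)%N.
  rewrite leqNgt; apply/negP => ap; have := g_w a ltac:(lia); rewrite ga; last lia.
  by rewrite /bump; lia.
exists a, j; split; first by rewrite /supp_pair; lia.
apply: skip_eq => [|i]; first by rewrite /skip_ok; have := ltn_ord (ord_max : 'I_n.+1); lia.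
rewrite /skip_seq -gE; case: ifP => [/ga //|i_n].
have -> : i = ord_max by apply: ord_inj; have := ltn_ord i; rewrite /=; lia.
by rewrite gE.
Qed.

Variable F : fieldType.
Implicit Types (b : 'M[F]_N) (x y : Idx n.+1 N -> F).

(* Expand along the last row: its only nonzero entry is b (j, f - 1), and the
   complementary minor does not depend on j. *)
Lemma det_subm_skip b : upper_tri b -> exists u v : nat -> F, forall a j,
  (p <= a <= n)%N -> (n < j < f)%N -> \det (subm b (skip a j) w) = u j * v a.
Proof.
move=> ub; exists (fun j => subm b (skip p j) w ord_max ord_max).
exists (fun a => \det (row' ord_max (col' ord_max (subm b (skip a n.+1) w)))).
move=> a j a_n n_j; have ok k c : (p <= c <= n)%N -> (n < k < f)%N -> skip_ok c k.
  by move=> ? ?; apply: skip_ok_supp; rewrite /supp_pair; lia.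
have [okj okpj okn] : [/\ skip_ok a j, skip_ok p j & skip_ok a n.+1].
  by split; apply: ok; lia.
rewrite (expand_det_row _ ord_max) (bigD1 ord_max) //= big1 ?addr0 => [|l /eqP l_n].
  rewrite /cofactor -signr_odd oddD addbb expr0 mul1r; congr (_ * _).
    rewrite !mxE; congr (b _ _); apply: ord_inj.
    change (entry (skip a j) ord_max = entry (skip p j) ord_max).
    by rewrite !entry_skip // /skip_seq /= ltnn.
  f_equal; apply/matrixP => i l; rewrite !mxE; congr (b _ _); apply: ord_inj.
  change (entry (skip a j) (lift ord_max i) = entry (skip a n.+1) (lift ord_max i)).
  by rewrite !entry_skip // /skip_seq lift_max ltn_ord.
have l_lt_n : (l < n)%N.
  have : (l : nat) <> n by move=> ln; apply: l_n; apply: ord_inj.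
  by have := ltn_ord l; lia.
rewrite mxE ub ?mul0r //; change (entry w l < entry (skip a j) ord_max)%N.
by rewrite w_skip entry_skip // /skip_seq /= ltnn l_lt_n /bump; lia.
Qed.

Lemma schubert_rank1 y a a' j j' :
  (p <= a <= n)%N -> (p <= a' <= n)%N -> (n < j < f)%N -> (n < j' < f)%N ->
  Schubert w y -> y (skip a j) * y (skip a' j') = y (skip a j') * y (skip a' j).
Proof.
move=> a_n a'_n n_j n_j' [_ Xy]; apply/eqP; rewrite -subr_eq0 -meval_binomialX; apply/eqP.
apply: Xy; first exact: homog_binomialX.
move=> z [g [c [ug _ _ zg]]]; have [u [v uv]] := det_subm_skip ug.
by rewrite meval_binomialX !zg !wedge_ebasis !uv //; ring.
Qed.

Lemma prod_skip (tau : nat -> F) a j : supp_pair a j ->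
  \prod_(i < n.+1) tau (entry (skip a j) i) * tau a = (\prod_(k < n.+1) tau k) * tau j.
Proof.
move=> aj; have a_n : (a < n.+1)%N by move: aj; rewrite /supp_pair; lia.
rewrite big_ord_recr /= (bigD1_ord (inord a)) //= inordK //.
rewrite entry_skip ?skip_ok_supp // /skip_seq /= ltnn.
have -> : \prod_(i < n) tau (entry (skip a j) (widen_ord (leqnSn n) i)) =
          \prod_(i < n) tau (bump a i).
  by apply: eq_bigr => i _; rewrite entry_skip ?skip_ok_supp // /skip_seq /= ltn_ord.
by rewrite mulrAC [_ * tau a]mulrC.
Qed.

Lemma skip_ratio (r : nat -> nat -> F) :
  (forall a j, supp_pair a j -> r a j != 0) ->
  (forall a a' j j', (p <= a <= n)%N -> (p <= a' <= n)%N ->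
     (n < j < f)%N -> (n < j' < f)%N -> r a j * r a' j' = r a j' * r a' j) ->
  exists2 tau : nat -> F, forall k, tau k != 0 &
    forall a j, supp_pair a j -> r a j = r n n * tau j / tau a.
Proof.
move=> r0 r1; have rnn : r n n != 0 by apply: r0; rewrite /supp_pair !eqxx orbT.
have ra a : (p <= a <= n)%N -> r a n.+1 != 0 by move=> ?; apply: r0; rewrite /supp_pair; lia.
have rj j : (n < j < f)%N -> r p j != 0 by move=> ?; apply: r0; rewrite /supp_pair; lia.
pose tau k := if (p <= k <= n)%N then r n n / r k n.+1
              else if (n < k < f)%N then r p k / r p n.+1 else 1.
have tau0 k : tau k != 0.
  rewrite /tau; case: ifP => [k_n|_]; first by rewrite mulf_neq0 ?invr_neq0 ?ra.
  case: ifP => [n_k|_]; last exact: oner_neq0.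
  by rewrite mulf_neq0 ?invr_neq0 ?rj //; lia.
exists tau => // a j.
case/orP => [/andP[a_n n_j]|/andP[/eqP-> /eqP->]]; last by rewrite mulfK.
have tj : tau j = r p j / r p n.+1 by rewrite /tau ifF ?ifT //; lia.
have ta : tau a = r n n / r a n.+1 by rewrite /tau ifT.
have := r1 a p j n.+1 a_n ltac:(lia) n_j ltac:(lia).
rewrite tj ta => e; apply: (mulIf (rj n.+1 _)); first lia.
rewrite e; field; rewrite rnn ra ?rj //; lia.
Qed.

Lemma torbit_of_full x y :
  Schubert w x -> full w x -> Schubert w y -> full w y -> Torbit x y.
Proof.
move=> Sx /fullP x0 Sy /fullP y0; pose r a j := y (skip a j) / x (skip a j).
have r0 a j : supp_pair a j -> r a j != 0.
  by move=> /idx_le_skip aj; rewrite mulf_neq0 ?invr_neq0 ?x0 ?y0.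
have [tau tau0 r_tau] : exists2 tau : nat -> F, forall k, tau k != 0 &
    forall a j, supp_pair a j -> r a j = r n n * tau j / tau a.
  apply: skip_ratio => // a a' j j' a_n a'_n n_j n_j'.
  rewrite /r !mulf_div (schubert_rank1 a_n a'_n n_j n_j' Sx).
  by rewrite (schubert_rank1 a_n a'_n n_j n_j' Sy).
pose T := \prod_(k < n.+1) tau k; have T0 : T != 0 by apply/prodf_neq0.
exists (fun i => tau i), (r n n / T); split => [//||s].
  by rewrite mulf_neq0 ?invr_neq0 ?r0 // /supp_pair !eqxx orbT.
rewrite wedge_diag.
have [/idx_le_w_skip[a [j [aj ->]]]|sw] := boolP (idx_le s w); last first.
  by rewrite (schubert_eq0 Sy sw) (schubert_eq0 Sx sw) !mulr0.
have prod_tau : \prod_i tau (entry (skip a j) i) = T * tau j / tau a.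
  by rewrite -(prod_skip tau aj) mulfK.
have -> : y (skip a j) = r a j * x (skip a j) by rewrite divfK ?x0 ?idx_le_skip.
by rewrite prod_tau r_tau //; field; rewrite T0 tau0.
Qed.

Hypothesis F_nonroot : forall P : {poly F}, P != 0 -> exists c, ~~ root P c.

Lemma schubert_dense_torbit : exists x, [/\ Schubert w x,
  open_in (Schubert w) (Torbit x) & dense_in (Schubert w) (Torbit x)].
Proof.
have [x [Bx fx]] := exists_borbit_full w F_nonroot; have Sx := borbit_schubert Bx.
have torbitE y : Torbit x y <-> Schubert w y /\ full w y.
  split => [Txy|[Sy fy]]; last exact: torbit_of_full.
  by split; [apply/borbit_schubert/(borbit_torbit Bx) | apply: full_torbit fx Txy].
exists x; split => //.
  exists (fun q : mpoly F (Idx n.+1 N) => q = prodX (fun s => idx_le s w)).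
  split => [_ ->|y]; first exact: homog_prodX.
  rewrite torbitE; split => [[Sy fy]|[Sy not0]]; split => //.
    by case=> _ /(_ _ erefl); rewrite meval_prodX; apply/eqP.
  apply/eqP => y0; apply: not0; split => [|_ ->]; first exact: Sy.1.
  by rewrite meval_prodX.
move=> y [nzy Xy]; split => // q hq q0; apply: Xy => // z Bz.
apply: (meval_borbit_eq0 F_nonroot) Bz => z' Bz' fz'.
by apply/q0/torbitE; split => //; apply: borbit_schubert.
Qed.

End ToricSchubert.

Theorem corollary6p2 (F : closedFieldType)
  (charF0 : [pchar F] =i pred0)
  (d N : nat) (hd1 : (1 <= d)%N) (hdN : (d < N)%N) (w : Idx d N) :
  ((exists p f : nat, [/\ (p < d - 1)%N, (d < f)%N, (f <= N)%N &
       forall i : 'I_d, (val w i : nat) =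
         if (i < p)%N then (i : nat)
         else if (i < d - 1)%N then (i + 1)%N else (f - 1)%N])
   \/
   (exists f : nat, [/\ (d < f)%N, (f <= N)%N &
       forall i : 'I_d, (val w i : nat) =
         if (i < d - 1)%N then (i : nat) else (f - 1)%N])) ->
  exists x : Idx d N -> F,
    [/\ Schubert w x,
        open_in (Schubert w) (Torbit x) &
        dense_in (Schubert w) (Torbit x)].
Proof.
case: d hd1 hdN w => [//|n] _ _ w.
have toric p f : (p <= n)%N -> (n.+1 < f)%N -> (f <= N)%N ->
    (forall i, entry w i = skip_seq n p f.-1 i) ->
    exists x : Idx n.+1 N -> F, [/\ Schubert w x,
      open_in (Schubert w) (Torbit x) & dense_in (Schubert w) (Torbit x)].
  move=> p_n n_f f_N w_skip.
  exact: (schubert_dense_torbit p_n n_f f_N w_skip (fun P => elimT (closed_nonrootP P))).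
case=> [[p [f [p_n n_f f_N w_pf]]] | [f [n_f f_N w_f]]].
  apply: (toric p f) => // [|i]; first by rewrite subn1 in p_n; apply: ltnW.
  transitivity (nat_of_ord (val w i)) => //.
  by rewrite w_pf /skip_seq /bump !subn1 addn1 /=; case: ifP; case: ifP; lia.
apply: (toric n f) => // i; transitivity (nat_of_ord (val w i)) => //.
by rewrite w_f /skip_seq /bump !subn1 /=; case: ifP; lia.
Qed.
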